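(* Let $p\in\mathcal{P}^d$ be perfect. Then the quadratic part $\pi_\Phi p$ of $p$ is an edge form of an L-type domain, i.e. $\pi_\Phi p\in\Phi^d$ and the L-type domain containing it is one-dimensional.
   Context: $\mathcal{P}^d$ is the set of real polynomials $f$ of degree $2$ in $x_1,\dots,x_d$ with $f(\mathbf{z})\ge0$ for all $\mathbf{z}\in\mathbb{Z}^d$; $\mathcal{V}(f)=\{\mathbf{z}\in\mathbb{Z}^d: f(\mathbf{z})=0\}$. $p\in\mathcal{P}^d$ is perfect if $\mathcal{V}(p)\neq\emptyset$ and every real polynomial of degree at most $2$ vanishing on $\mathcal{V}(p)$ is a scalar multiple of $p$. $\pi_\Phi p$ denotes the homogeneous degree-2 part of $p$. $\Phi^d$ is the cone of quadratic forms on $\mathbb{R}^d$ that are positive definite or positive semidefinite with kernel spanned by integer vectors. For $\varphi\in\Phi^d$, the Delaunay tiling $\mathrm{Del}(\varphi)$ is the tiling of $\mathbb{R}^d$ by the Delaunay polyhedra $\operatorname{conv}\mathcal{V}(f)$, $f\in\mathcal{P}^d$ with $\pi_\Phi f=\varphi$ and $\mathcal{V}(f)$ not contained in a hyperplane (for positive definite $\varphi$ these are the polytopes inscribed in ellipsoids $\varphi[\mathbf{x}-\mathbf{c}]\le R^2$ with no interior integer points; for semidefinite $\varphi$ they are cylinders over such polytopes along $\ker\varphi$). The L-type domain of a Delaunay tiling $\mathcal{D}$ is $\{\varphi\in\Phi^d:\mathrm{Del}(\varphi)=\mathcal{D}\}$; forms lying in one-dimensional L-type domains are called edge forms. *)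

From HB Require Import structures.
From mathcomp Require Import all_boot all_order all_algebra.
From mathcomp Require Import reals.
Set Implicit Arguments. Unset Strict Implicit. Unset Printing Implicit Defensive.
Import Order.TTheory GRing.Theory Num.Theory.
Local Open Scope ring_scope.

Section Defs.
Variables (R : realType) (d : nat).

(* A real polynomial of degree at most 2 in x_1..x_d, written
   f(x) = x A x^T + 2 b . x + c  with A symmetric (points are row vectors). *)
Record quad := Quad { qA : 'M[R]_d; qb : 'rV[R]_d; qc : R }.

Definition qeval (f : quad) (x : 'rV[R]_d) : R :=
  (x *m qA f *m x^T) 0 0 + 2 * (x *m (qb f)^T) 0 0 + qc f.

(* f is (a canonical coefficient representation of) a polynomial of degree <= 2 *)
Definition is_poly2 (f : quad) : Prop := (qA f)^T = qA f.
Definition is_deg2 (f : quad) : Prop := is_poly2 f /\ qA f != 0.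

Definition qscale (l : R) (f : quad) : quad :=
  Quad (l *: qA f) (l *: qb f) (l * qc f).

Definition Zpt (x : 'rV[R]_d) : Prop := forall j, x 0 j \is a Num.int.

Definition inP (f : quad) : Prop :=
  is_deg2 f /\ forall x, Zpt x -> 0 <= qeval f x.

Definition Vset (f : quad) (x : 'rV[R]_d) : Prop := Zpt x /\ qeval f x = 0.

Definition perfect (p : quad) : Prop :=
  inP p /\ (exists x, Vset p x) /\
  forall g, is_poly2 g -> (forall x, Vset p x -> qeval g x = 0) ->
    exists l : R, g = qscale l p.

Definition piPhi (p : quad) : 'M[R]_d := qA p.

Definition qform (phi : 'M[R]_d) (x : 'rV[R]_d) : R := (x *m phi *m x^T) 0 0.

(* Phi^d: positive semidefinite forms whose kernel is spanned by integer vectors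
   (positive definite forms included: empty spanning family). *)
Definition inPhi (phi : 'M[R]_d) : Prop :=
  phi^T = phi /\ (forall x, 0 <= qform phi x) /\
  exists (n : nat) (v : 'I_n -> 'rV[R]_d),
    (forall i, Zpt (v i) /\ v i *m phi = 0) /\
    forall x, x *m phi = 0 -> exists c : 'I_n -> R, x = \sum_(i < n) c i *: v i.

Definition in_hyperplane (S : 'rV[R]_d -> Prop) : Prop :=
  exists (a : 'rV[R]_d) (beta : R), a != 0 /\
    forall x, S x -> (x *m a^T) 0 0 = beta.

Definition conv (S : 'rV[R]_d -> Prop) (x : 'rV[R]_d) : Prop :=
  exists (n : nat) (pt : 'I_n -> 'rV[R]_d) (w : 'I_n -> R),
    (forall i, S (pt i)) /\ (forall i, 0 <= w i) /\ \sum_(i < n) w i = 1 /\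
    x = \sum_(i < n) w i *: pt i.

Definition Del (phi : 'M[R]_d) (P : 'rV[R]_d -> Prop) : Prop :=
  exists f, inP f /\ piPhi f = phi /\ ~ in_hyperplane (Vset f) /\
    forall x, P x <-> conv (Vset f) x.

Definition same_tiling (D1 D2 : ('rV[R]_d -> Prop) -> Prop) : Prop :=
  forall P, D1 P <-> D2 P.

Definition ltype_domain (D : ('rV[R]_d -> Prop) -> Prop) (psi : 'M[R]_d) : Prop :=
  inPhi psi /\ same_tiling (Del psi) D.

Definition one_dimensional (S : 'M[R]_d -> Prop) : Prop :=
  exists psi0, psi0 != 0 /\ S psi0 /\ forall psi, S psi -> exists l : R, psi = l *: psi0.

Definition edge_form (phi : 'M[R]_d) : Prop :=
  inPhi phi /\ one_dimensional (ltype_domain (Del phi)).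

End Defs.

(* A perfect p is determined up to scaling by the linear conditions "g vanishes
   on V(p)", whose coefficients are rational; hence p is a real multiple of a
   rational polynomial, and ker (pi p) is spanned by integer vectors.  Since
   p >= 0 on Z^d, pi p is positive semidefinite: if pi p[x] < 0, then p is
   negative at an integer point close to N x for N large.  So pi p lies in
   Phi^d, and conv V(p) is one of its Delaunay polytopes, as an affine function
   vanishing on V(p) would be a multiple of p.
   If Del(psi) = Del(pi p), then conv V(p) = conv V(f) for some f with
   pi f = psi.  Being convex, f is <= 0 on conv V(f); being >= 0 on Z^d, it
   vanishes on V(p), so f = l p by perfection and psi = l pi p. *)

From HB Require Import structures.
From mathcomp Require Import all_boot all_order all_algebra.
From mathcomp Require Import reals boolp.
From mathcomp Require Import ring lra.
Set Implicit Arguments. Unset Strict Implicit. Unset Printing Implicit Defensive.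
Import Order.TTheory GRing.Theory Num.Theory.
Local Open Scope ring_scope.

Section RationalRelations.
Variable R : realType.

Lemma rat_relations_witness (M : nat) (P : 'cV[R]_M) : P != 0 ->
  exists2 w : 'cV[rat]_M, w != 0 &
    forall a : 'rV[rat]_M, map_mx ratr a *m P = 0 -> a *m w = 0.
Proof.
move=> P0.
pose annihilator_rank (k : nat) :=
  `[< exists m (X : 'M[rat]_(m, M)), map_mx ratr X *m P = 0 /\ \rank X = k >].
have rank0 : exists k, annihilator_rank k.
  by exists 0%N; apply/asboolP; exists 0%N, 0; rewrite map_mx0 mul0mx mxrank0.
have rank_le k : annihilator_rank k -> (k <= M)%N.
  by move=> /asboolP[m [X [_ <-]]]; exact: rank_leq_col.
case: (ex_maxnP rank0 rank_le) => r /asboolP[m [X [XP rX]]] rmax.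
(* By maximality every rational relation of P lies in the row space of X, so
   any vector of the cokernel of X satisfies all of them. *)
have [i [j cokerX_ij]] : exists i j, cokermx X i j != 0.
  have : cokermx X != 0.
    rewrite cokermx_eq0; apply: contra P0 => /row_fullP[B BX]; apply/eqP.
    by rewrite -(mul1mx P) -(map_mx1 (@ratr R)) -BX map_mxM -mulmxA XP mulmx0.
  by rewrite matrix_eq0 => /forallPn[i /forallPn[j]]; exists i, j.
exists (col j (cokermx X)).
  by apply: contraNneq cokerX_ij => /matrixP/(_ i 0); rewrite !mxE => ->.
move=> a aP; pose Y := col_mx X a.
have YP : map_mx ratr Y *m P = 0 by rewrite map_col_mx mul_col_mx XP aP col_mx0.
have XY : (X <= Y)%MS by rewrite -addsmxE addsmxSl.
have /submxP[u ->] : (a <= X)%MS.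
  have := mxrank_leqif_sup XY; rewrite rX => /leqifP.
  case: ifP => [YX _ | _]; last by rewrite ltnNge rmax //; apply/asboolP; exists _, Y.
  by apply: submx_trans YX; rewrite -addsmxE addsmxSr.
by rewrite colE mulmxA -(mulmxA u) mulmx_coker mulmx0 mul0mx.
Qed.

Lemma rat_relations_witnessF (I : finType) (P : I -> R) : (exists k, P k != 0) ->
  exists2 w : I -> rat, (exists k, w k != 0) &
    forall a : I -> rat, \sum_k ratr (a k) * P k = 0 -> \sum_k a k * w k = 0.
Proof.
move=> [k Pk]; pose Pc : 'cV_#|I| := \col_i P (enum_val i).
have Pc0 : Pc != 0.
  by apply: contraNneq Pk => /matrixP/(_ (enum_rank k) 0); rewrite !mxE enum_rankK => ->.
have [w w0 hw] := rat_relations_witness Pc0.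
exists (fun k => w (enum_rank k) 0).
  move: w0; rewrite matrix_eq0 => /forallPn[i /forallPn[j]]; rewrite (ord1 j) => wi0.
  by exists (enum_val i); rewrite enum_valK.
move=> a aP; pose ar : 'rV_#|I| := \row_i a (enum_val i).
have /hw/matrixP/(_ 0 0) : map_mx ratr ar *m Pc = 0.
  apply/matrixP => i j; rewrite !mxE -[RHS]aP.
  rewrite (big_enum_val (A := predT) (fun k => ratr (a k) * P k)).
  by apply: eq_bigr => l _; rewrite !mxE.
rewrite !mxE => arw0; apply: etrans arw0.
rewrite (big_enum_val (A := predT) (fun k => a k * _)).
by apply: eq_bigr => l _; rewrite !mxE enum_valK.
Qed.

End RationalRelations.

Section Quadratics.
Variables (R : realType) (d : nat).
Implicit Types (f : quad R d) (A : 'M[R]_d) (b x y h : 'rV[R]_d).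

Definition bil A x y : R := (x *m A *m y^T) 0 0.
Definition lin b x : R := (x *m b^T) 0 0.

Lemma qevalE f x : qeval f x = bil (qA f) x x + 2 * lin (qb f) x + qc f.
Proof. by []. Qed.

Lemma bilDl A x y h : bil A (x + y) h = bil A x h + bil A y h.
Proof. by rewrite /bil !mulmxDl mxE. Qed.

Lemma bilDr A x y h : bil A h (x + y) = bil A h x + bil A h y.
Proof. by rewrite /bil linearD /= mulmxDr mxE. Qed.

Lemma bilZl A a x y : bil A (a *: x) y = a * bil A x y.
Proof. by rewrite /bil -!scalemxAl mxE. Qed.

Lemma bilZr A a x y : bil A x (a *: y) = a * bil A x y.
Proof. by rewrite /bil linearZ /= -scalemxAr mxE. Qed.

Lemma linD b x y : lin b (x + y) = lin b x + lin b y.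
Proof. by rewrite /lin mulmxDl mxE. Qed.

Lemma linZ b a x : lin b (a *: x) = a * lin b x.
Proof. by rewrite /lin -scalemxAl mxE. Qed.

Lemma bil_suml A n (c : 'I_n -> R) (u : 'I_n -> 'rV[R]_d) y :
  bil A (\sum_i c i *: u i) y = \sum_i c i * bil A (u i) y.
Proof.
by rewrite /bil !mulmx_suml summxE; apply: eq_bigr => i _; rewrite -!scalemxAl mxE.
Qed.

Lemma bil_sumr A n (c : 'I_n -> R) (u : 'I_n -> 'rV[R]_d) x :
  bil A x (\sum_i c i *: u i) = \sum_i c i * bil A x (u i).
Proof.
rewrite /bil linear_sum mulmx_sumr summxE.
by apply: eq_bigr => i _; rewrite linearZ -scalemxAr mxE.
Qed.

Lemma lin_sum b n (c : 'I_n -> R) (u : 'I_n -> 'rV[R]_d) :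
  lin b (\sum_i c i *: u i) = \sum_i c i * lin b (u i).
Proof.
by rewrite /lin mulmx_suml summxE; apply: eq_bigr => i _; rewrite -scalemxAl mxE.
Qed.

Definition qdiff f x h : R := bil (qA f) x h + bil (qA f) h x + 2 * lin (qb f) h.

Lemma qeval_shift f x h : qeval f (x + h) = qeval f x + qdiff f x h + qform (qA f) h.
Proof.
rewrite !qevalE /qdiff /qform -/(bil _ h h) bilDl !bilDr linD; ring.
Qed.

Lemma qdiff_sum f x n (c : 'I_n -> R) (u : 'I_n -> 'rV[R]_d) :
  qdiff f x (\sum_i c i *: u i) = \sum_i c i * qdiff f x (u i).
Proof.
rewrite /qdiff bil_sumr bil_suml lin_sum mulr_sumr -!big_split /=.
by apply: eq_bigr => i _; ring.
Qed.

Lemma qeval_conv_le f n (pt : 'I_n -> 'rV[R]_d) (w : 'I_n -> R) :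
  (forall x, 0 <= qform (qA f) x) -> (forall i, 0 <= w i) -> \sum_i w i = 1 ->
  qeval f (\sum_i w i *: pt i) <= \sum_i w i * qeval f (pt i).
Proof.
move=> psd w_ge0 w1; set xb := \sum_i w i *: pt i.
have pt_shift i : pt i = xb + (pt i - xb) by rewrite addrC subrK.
have mean0 : \sum_i w i *: (pt i - xb) = 0.
  by rewrite (eq_bigr _ (fun i _ => scalerBr _ _ _)) sumrB -scaler_suml w1 scale1r subrr.
have qdiff0 : \sum_i w i * qdiff f xb (pt i - xb) = 0.
  by rewrite -qdiff_sum mean0 /qdiff /bil /lin trmx0 mulmx0 !mul0mx mxE mulr0 !addr0.
have expand i : w i * qeval f (pt i) =
    w i * qeval f xb + w i * qdiff f xb (pt i - xb) + w i * qform (qA f) (pt i - xb).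
  by rewrite {1}(pt_shift i) qeval_shift; ring.
rewrite (eq_bigr _ (fun i _ => expand i)) !big_split /= qdiff0 -mulr_suml w1.
by rewrite mul1r addr0 lerDl; apply: sumr_ge0 => i _; rewrite mulr_ge0.
Qed.

Lemma bil_coord A x y : bil A x y = \sum_i \sum_j x 0 i * A i j * y 0 j.
Proof.
rewrite /bil mxE; under eq_bigr => j _ do rewrite !mxE big_distrl /=.
by rewrite exchange_big.
Qed.

Lemma lin_coord b x : lin b x = \sum_j x 0 j * b 0 j.
Proof. by rewrite /lin mxE; apply: eq_bigr => j _; rewrite !mxE. Qed.

Lemma normr_bil_le A x y (al be : R) : 0 <= al -> 0 <= be ->
  (forall j, `|x 0 j| <= al) -> (forall j, `|y 0 j| <= be) ->
  `|bil A x y| <= (\sum_i \sum_j `|A i j|) * al * be.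
Proof.
move=> al0 be0 hx hy; rewrite bil_coord.
apply: le_trans (ler_norm_sum _ _ _) _; rewrite !mulr_suml; apply: ler_sum => i _.
apply: le_trans (ler_norm_sum _ _ _) _; rewrite !mulr_suml; apply: ler_sum => j _.
rewrite !normrM (mulrC `|x 0 i|).
by apply: ler_pM; rewrite ?mulr_ge0 // ler_wpM2l.
Qed.

Lemma normr_lin_le b x (al : R) : 0 <= al -> (forall j, `|x 0 j| <= al) ->
  `|lin b x| <= (\sum_j `|b 0 j|) * al.
Proof.
move=> al0 hx; rewrite lin_coord.
apply: le_trans (ler_norm_sum _ _ _) _; rewrite mulr_suml; apply: ler_sum => j _.
by rewrite normrM mulrC; apply: ler_pM.
Qed.

Lemma round_int_point y : exists2 z, Zpt z & forall j, `|(z - y) 0 j| <= 1.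
Proof.
exists (\row_j (Num.floor (y 0 j))%:~R) => [j | j]; rewrite !mxE ?intr_int //.
have /andP[fl_le lt_fl] := floor_itv (y 0 j).
rewrite ler_norml; apply/andP; split; last by lra.
by move: lt_fl; rewrite intrD; lra.
Qed.

Lemma qeval_scaled_le f x : exists C : R, forall (N : nat) (e : 'rV[R]_d), (1 <= N)%N ->
  (forall j, `|e 0 j| <= 1) ->
  qeval f (N%:R *: x + e) <= N%:R ^+ 2 * qform (qA f) x + N%:R * C.
Proof.
set A := qA f; set S := \sum_i \sum_j `|A i j|; set T := \sum_j `|qb f 0 j|.
set m := 1 + \sum_j `|x 0 j|.
have S0 : 0 <= S by do 2![apply: sumr_ge0 => ? _].
have T0 : 0 <= T by apply: sumr_ge0.
have m0 : 0 <= m by rewrite addr_ge0 ?sumr_ge0.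
have hm j : `|x 0 j| <= m.
  by rewrite /m (bigD1 j) //= addrCA lerDl addr_ge0 ?sumr_ge0.
exists (2 * S * m + 2 * T * m + S + 2 * T + `|qc f|) => N e N1 he.
have linear_part_le : bil A x e + bil A e x + 2 * lin (qb f) x <= 2 * S * m + 2 * T * m.
  have := normr_bil_le A m0 ler01 hm he; have := normr_bil_le A ler01 m0 he hm.
  have := normr_lin_le (qb f) m0 hm; rewrite !mulr1 -/S -/T !ler_norml.
  by move=> /andP[_ ?] /andP[_ ?] /andP[_ ?]; lra.
have const_part_le : bil A e e + 2 * lin (qb f) e + qc f <= S + 2 * T + `|qc f|.
  have := normr_bil_le A ler01 ler01 he he; have := normr_lin_le (qb f) ler01 he.
  rewrite !mulr1 -/S -/T !ler_norml => /andP[_ ?] /andP[_ ?].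
  by have := ler_norm (qc f); lra.
have N_ge1 : 1 <= N%:R :> R by rewrite ler1n.
have := ler_wpM2l (ler0n _ N) linear_part_le.
have : S + 2 * T + `|qc f| <= N%:R * (S + 2 * T + `|qc f|).
  by rewrite ler_peMl // !addr_ge0 ?mulr_ge0.
rewrite qevalE bilDl !bilDr !bilZl !bilZr linD linZ /qform -/(bil A x x) -/A.
by nra.
Qed.

Lemma qform_ge0_of_int f : (forall z, Zpt z -> 0 <= qeval f z) ->
  forall x, 0 <= qform (qA f) x.
Proof.
move=> f_ge0 x; rewrite leNgt; apply/negP => q_lt0.
have [C hC] := qeval_scaled_le f x.
pose N := (Num.truncn (C / - qform (qA f) x)).+1.
have NC : C < N%:R * - qform (qA f) x.
  by rewrite -ltr_pdivrMr ?oppr_gt0 //; exact: truncnS_gt.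
have [z Zz hz] := round_int_point (N%:R *: x).
have := hC N (z - N%:R *: x) isT hz; rewrite addrC subrK expr2.
have N_gt0 : 0 < N%:R :> R by rewrite ltr0n.
have := NC; rewrite -(ltr_pM2l N_gt0); have := f_ge0 z Zz; lra.
Qed.

Definition coef_index := ('I_d * 'I_d + ('I_d + 'I_1))%type.

Definition coef f (k : coef_index) : R :=
  match k with
  | inl ij => qA f ij.1 ij.2
  | inr (inl j) => qb f 0 j
  | inr (inr _) => qc f
  end.

Definition monomial x (k : coef_index) : R :=
  match k with
  | inl ij => x 0 ij.1 * x 0 ij.2
  | inr (inl j) => 2 * x 0 j
  | inr (inr _) => 1
  end.

Definition quad_of_coef (c : coef_index -> R) : quad R d :=
  Quad (\matrix_(i, j) c (inl (i, j))) (\row_j c (inr (inl j))) (c (inr (inr ord0))).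

Lemma coef_of_quad c : coef (quad_of_coef c) =1 c.
Proof. by case=> [[i j]|[j|j]] /=; rewrite ?mxE // (ord1 j). Qed.

Lemma coef_qscale l f k : coef (qscale l f) k = l * coef f k.
Proof. by case: k => [[i j]|[j|j]] /=; rewrite ?mxE. Qed.

Lemma qeval_coef f x : qeval f x = \sum_k monomial x k * coef f k.
Proof.
rewrite qevalE bil_coord pair_bigA lin_coord mulr_sumr.
rewrite big_sumType /= big_sumType /= big_ord1 mul1r addrA; congr (_ + _ + _).
  by apply: eq_bigr => -[i j] _ /=; ring.
by apply: eq_bigr => j _; ring.
Qed.

Lemma monomial_rat x : Zpt x -> exists m : coef_index -> rat, forall k, monomial x k = ratr (m k).
Proof.
move=> Zx; have xE j : x 0 j = ratr (Num.floor (x 0 j))%:~R by rewrite ratr_int floorK.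
exists (fun k => match k with
  | inl ij => (Num.floor (x 0 ij.1))%:~R * (Num.floor (x 0 ij.2))%:~R
  | inr (inl j) => 2 * (Num.floor (x 0 j))%:~R
  | inr (inr _) => 1 end).
by case=> [[i j]|[j|j]] /=; rewrite ?rmorphM /= -?xE ?rmorph1 ?ratr_nat.
Qed.
End Quadratics.

Lemma sum_indicator_mul (V : pzRingType) (I : finType) (k0 : I) (F : I -> V) :
  \sum_k (k == k0)%:R * F k = F k0.
Proof.
by rewrite (bigD1 k0) //= eqxx mul1r big1 ?addr0 // => k /negbTE->; rewrite mul0r.
Qed.

Section IntegerKernel.
Variables (R : realType) (d : nat).

Definition row_denom (r : 'rV[rat]_d) : int := \prod_j denq (r 0 j).

Lemma row_denom_neq0 r : row_denom r != 0.
Proof. by rewrite prodf_seq_neq0; apply/allP => j _ /=; rewrite denq_neq0. Qed.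

Lemma row_denom_int r j : (row_denom r)%:~R * r 0 j \is a Num.int.
Proof.
rewrite /row_denom (bigD1 j) //= intrM mulrAC [_ * r 0 j]mulrC -numqE -intrM.
exact: intr_int.
Qed.

Lemma kermx_int_spanning (Aq : 'M[rat]_d) : exists n (v : 'I_n -> 'rV[R]_d),
  (forall i, Zpt (v i) /\ v i *m map_mx ratr Aq = 0) /\
  forall x, x *m map_mx ratr Aq = 0 -> exists c : 'I_n -> R, x = \sum_i c i *: v i.
Proof.
pose K := kermx Aq; pose s i := row_denom (row i K).
exists d, (fun i => map_mx ratr ((s i)%:~R *: row i K)); split => [i | x].
  split => [j | ].
    move: (row_denom_int (row i K) j); rewrite !mxE /s => /floorK <-.
    by rewrite ratr_int intr_int.
  by rewrite -map_mxM -scalemxAl -row_mul mulmx_ker row0 scaler0 map_mx0.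
move=> /sub_kermxP; rewrite -map_kermx => /submxP[u ->].
exists (fun i => u 0 i / ratr (s i)%:~R).
rewrite mulmx_sum_row; apply: eq_bigr => i _.
rewrite map_mxZ scalerA map_row divfK // fmorph_eq0 intr_eq0.
exact: row_denom_neq0.
Qed.

End IntegerKernel.

Section Perfect.
Variables (R : realType) (d : nat).
Implicit Types (p f : quad R d).

Lemma perfect_rat_multiple p : perfect p ->
  exists2 l : R, l != 0 & exists Aq : 'M[rat]_d, qA p = l *: map_mx ratr Aq.
Proof.
move=> [[[p_sym p_neq0] _] [_ p_unique]].
have [k pk] : exists k, coef p k != 0.
  by move: p_neq0; rewrite matrix_eq0 => /forallPn[i /forallPn[j pij]]; exists (inl (i, j)).
have [w [k1 wk1] w_rel] := rat_relations_witnessF (ex_intro _ k pk).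
pose G : quad R d := quad_of_coef (fun k => ratr (w k)).
have G_sym : is_poly2 G.
  (* The symmetry p_ij = p_ji is a rational relation, hence inherited by w. *)
  apply/matrixP => i j; rewrite !mxE; congr ratr; apply/eqP; rewrite -subr_eq0; apply/eqP.
  pose a (k : coef_index d) : rat := (k == inl (j, i))%:R - (k == inl (i, j))%:R.
  have : \sum_k a k * w k = 0.
    apply: w_rel; under eq_bigr do rewrite rmorphB /= !ratr_nat mulrBl.
    by rewrite sumrB !sum_indicator_mul /= -[in qA p j i]p_sym mxE subrr.
  by under eq_bigr do rewrite mulrBl; rewrite sumrB !sum_indicator_mul.
have G_vanish z : Vset p z -> qeval G z = 0.
  move=> [Zz pz0]; have [m mE] := monomial_rat Zz.
  rewrite qeval_coef; under eq_bigr do rewrite coef_of_quad mE -rmorphM.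
  rewrite -rmorph_sum w_rel ?rmorph0 // -[X in _ = X]pz0 qeval_coef.
  by apply: eq_bigr => k' _; rewrite mE.
have [l Gl] := p_unique G G_sym G_vanish.
have l_neq0 : l != 0.
  apply: contraNneq wk1 => l0.
  have : coef G k1 = ratr (w k1) by exact: coef_of_quad.
  by rewrite Gl coef_qscale l0 mul0r => /esym/eqP; rewrite fmorph_eq0.
exists l^-1; first by rewrite invr_eq0.
exists (\matrix_(i, j) w (inl (i, j))).
have -> : map_mx ratr (\matrix_(i, j) w (inl (i, j))) = qA G.
  by apply/matrixP => i j; rewrite !mxE.
by rewrite Gl /= scalerA mulVf // scale1r.
Qed.

Lemma perfect_inPhi p : perfect p -> inPhi (piPhi p).
Proof.
move=> pp; have [[[p_sym _] p_ge0] _] := pp.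
split=> //; split; first exact: qform_ge0_of_int.
rewrite /piPhi; have [l l_neq0 [Aq ->]] := perfect_rat_multiple pp.
have [n [v [v_ker v_span]]] := kermx_int_spanning R Aq.
exists n, v; split=> [i | x].
  by have [Zv v0] := v_ker i; rewrite -scalemxAr v0 scaler0.
rewrite -scalemxAr => /eqP; rewrite scaler_eq0 (negbTE l_neq0) => /eqP.
exact: v_span.
Qed.

Lemma perfect_not_in_hyperplane p : perfect p -> ~ in_hyperplane (Vset p).
Proof.
move=> [[[_ p_neq0] _] [_ p_unique]] [a [beta [a_neq0 Va]]].
have [l g_eq] : exists l, Quad 0 a (- (2 * beta)) = qscale l p.
  apply: p_unique; first by rewrite /is_poly2 /= trmx0.
  by move=> x Vx; rewrite /qeval /= mulmx0 mul0mx mxE Va //; ring.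
have /esym/eqP := congr1 (@qA R d) g_eq.
rewrite scaler_eq0 (negbTE p_neq0) orbF => /eqP l0.
have /= a_eq := congr1 (@qb R d) g_eq.
by move: a_neq0; rewrite a_eq l0 scale0r eqxx.
Qed.

Lemma sub_conv (S : 'rV[R]_d -> Prop) x : S x -> conv S x.
Proof.
move=> Sx; exists 1%N, (fun _ => x), (fun _ => 1).
by rewrite !big_ord1 scale1r; split=> //; split=> //; split.
Qed.

Lemma conv_Vset_eq0 f z : inP f -> conv (Vset f) z -> Zpt z -> qeval f z = 0.
Proof.
move=> [_ f_ge0] [n [pt [w [Vpt [w_ge0 [w1 ->]]]]]] Zz.
apply/eqP; rewrite eq_le f_ge0 // andbT.
apply: le_trans (qeval_conv_le pt (qform_ge0_of_int f_ge0) w_ge0 w1) _.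
by rewrite big1 // => i _; have [_ ->] := Vpt i; rewrite mulr0.
Qed.

Lemma perfect_ltype_domain_scalar p psi : perfect p ->
  ltype_domain (Del (piPhi p)) psi -> exists l : R, psi = l *: piPhi p.
Proof.
move=> pp [_ same_Del]; have [p_inP [_ p_unique]] := pp.
have Del_p : Del (piPhi p) (conv (Vset p)).
  by exists p; do 3!split=> //; exact: perfect_not_in_hyperplane.
have [f [f_inP [f_psi [_ f_conv]]]] := (same_Del _).2 Del_p.
have f_vanish z : Vset p z -> qeval f z = 0.
  by move=> Vz; apply: conv_Vset_eq0 Vz.1 => //; apply/f_conv/sub_conv.
have [l f_eq] := p_unique f f_inP.1.1 f_vanish.
by exists l; rewrite -f_psi f_eq.
Qed.

End Perfect.

Theorem proposition1 (R : realType) (d : nat) (p : quad R d) :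
  perfect p -> edge_form (piPhi p).
Proof.
move=> pp; have inPhi_p := perfect_inPhi pp; split=> //.
exists (piPhi p); split; first by case: pp => [[[_ p_neq0] _] _].
split; first by split=> // P.
by move=> psi; exact: perfect_ltype_domain_scalar.
Qed.
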